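(* Let $(A,\Delta,\epsilon)$ be a biunital bialgebra over $k$, and let $W$ be the left ideal of $A\otimes A$ generated by $\{\epsilon(a)(1\otimes 1)-\Delta(a)\mid a\in A\}$. Then the left $A\otimes A$-module $(A\otimes A)/W$ is a preantipode for the modulation $(A,\boldsymbol{\Delta},\boldsymbol{\epsilon})$ of $A$ (where $\boldsymbol\Delta$ is $A\otimes A$ with left $A\otimes A$-action by multiplication and right $A$-action $x\cdot b=x\Delta(b)$, and $\boldsymbol\epsilon=k$ with right $A$-action $\lambda\cdot b=\lambda\epsilon(b)$). If moreover $A$ is a Hopf algebra with antipode $S$, then $(A\otimes A)/W$ is isomorphic, as an $(A,A^{op})$-bimodule, to the modulation $\mathbf{S}$ of $S$ (viewed as a homomorphism $A^{op}\to A$), namely $A$ with $a\cdot x\cdot b=a\,x\,S(b)$, via $[a\otimes b]\mapsto aS(b)$; consequently $(A,\boldsymbol\Delta,\boldsymbol\epsilon,\mathbf S)$ is a hopfish algebra.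
   Context: $k$ is a commutative ring, $\otimes=\otimes_k$, and ${}^*$ denotes the $k$-dual. A sesquiunital sesquialgebra over $k$ is a unital $k$-algebra $A$ with an $(A\otimes A,A)$-bimodule $\boldsymbol\Delta$ (coproduct) and a right $A$-module $\boldsymbol\epsilon$ (counit) such that $(A\otimes\boldsymbol\Delta)\otimes_{A\otimes A}\boldsymbol\Delta\cong(\boldsymbol\Delta\otimes A)\otimes_{A\otimes A}\boldsymbol\Delta$ as $(A\otimes A\otimes A,A)$-bimodules, and $(\boldsymbol\epsilon\otimes A)\otimes_{A\otimes A}\boldsymbol\Delta$ and $(A\otimes\boldsymbol\epsilon)\otimes_{A\otimes A}\boldsymbol\Delta$ are both isomorphic to $A$ as $(A,A)$-bimodules. The space $Z'=\mathrm{Hom}_A(\boldsymbol\epsilon,\boldsymbol\Delta)$ of right $A$-module maps is a right $A\otimes A$-module via $(g b)(u)=g(bu)$. A preantipode is a left $A\otimes A$-module $\mathbf S$ together with an isomorphism of right $A\otimes A$-modules $\mathbf S^*\cong Z'$; $\mathbf S$ is regarded as an $(A,A^{op})$-bimodule (left $A$ from the first factor, right $A^{op}$ from the second). A preantipode is an antipode, and $A$ with it is a hopfish algebra, if $\mathbf S$ is free of rank one as a left $A$-module. *)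

From HB Require Import structures.
From mathcomp Require Import all_boot all_order all_algebra.
Set Implicit Arguments. Unset Strict Implicit. Unset Printing Implicit Defensive.
Import GRing.Theory.
Local Open Scope ring_scope.

Section HopfishDefs.
Variable k : comNzRingType.

Definition klinear (U V : lmodType k) (f : U -> V) : Prop :=
  forall (c : k) (x y : U), f (c *: x + y) = c *: f x + f y.

Definition kform (U : lmodType k) (f : U -> k) : Prop :=
  forall (c : k) (x y : U), f (c *: x + y) = c * f x + f y.

Definition bilinear (U V W : lmodType k) (f : U -> V -> W) : Prop :=
  (forall v, klinear (fun u => f u v)) /\ (forall u, klinear (f u)).

Definition trilinear (U W : lmodType k) (f : U -> U -> U -> W) : Prop :=
  (forall y z, klinear (fun x => f x y z)) /\
  (forall x z, klinear (fun y => f x y z)) /\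
  (forall x y, klinear (f x y)).

Definition is_tensor (U V T : lmodType k) (t : U -> V -> T) : Prop :=
  bilinear t /\
  forall (M : lmodType k) (f : U -> V -> M), bilinear f ->
    exists! g : T -> M, klinear g /\ forall u v, g (t u v) = f u v.

Definition is_tensor3 (U T : lmodType k) (t3 : U -> U -> U -> T) : Prop :=
  trilinear t3 /\
  forall (M : lmodType k) (f : U -> U -> U -> M), trilinear f ->
    exists! g : T -> M, klinear g /\ forall x y z, g (t3 x y z) = f x y z.

Definition is_tensor_algebra (A B : algType k) (t : A -> A -> B) : Prop :=
  is_tensor t /\ t 1 1 = 1 /\
  forall a b c d, t a b * t c d = t (a * c) (b * d).

Section Bialg.
Variables (A B : algType k) (t : A -> A -> B) (D : A -> B) (e : A -> k).

Definition counit_left : Prop :=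
  exists g : B -> A, klinear g /\ (forall a b, g (t a b) = e a *: b) /\
                     forall a, g (D a) = a.

Definition counit_right : Prop :=
  exists g : B -> A, klinear g /\ (forall a b, g (t a b) = e b *: a) /\
                     forall a, g (D a) = a.

(* (D (x) id) o D = (id (x) D) o D, in any triple tensor product A(x)A(x)A *)
Definition coassociative : Prop :=
  forall (T : lmodType k) (t3 : A -> A -> A -> T), is_tensor3 t3 ->
  exists (El Er : A -> B -> T) (D1 D2 : B -> T),
    (forall y, klinear (El y) /\ forall p q, El y (t p q) = t3 p q y) /\
    (forall x, klinear (Er x) /\ forall p q, Er x (t p q) = t3 x p q) /\
    klinear D1 /\ (forall x y, D1 (t x y) = El y (D x)) /\
    klinear D2 /\ (forall x y, D2 (t x y) = Er x (D y)) /\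
    forall a, D1 (D a) = D2 (D a).

Definition is_bialgebra : Prop :=
  (klinear D /\ (forall a b, D (a * b) = D a * D b) /\ D 1 = 1) /\
  (kform e /\ (forall a b, e (a * b) = e a * e b) /\ e 1 = 1) /\
  counit_left /\ counit_right /\ coassociative.

(* S is an antipode: m (S (x) id) D = m (id (x) S) D = unit o counit *)
Definition is_antipode (S : A -> A) : Prop :=
  klinear S /\
  (exists g : B -> A, klinear g /\ (forall a b, g (t a b) = S a * b) /\
                      forall a, g (D a) = e a *: 1) /\
  (exists g : B -> A, klinear g /\ (forall a b, g (t a b) = a * S b) /\
                      forall a, g (D a) = e a *: 1).

Definition Wideal (x : B) : Prop :=
  exists (n : nat) (y : 'I_n -> B) (a : 'I_n -> A),
    x = \sum_(i < n) y i * (e (a i) *: 1 - D (a i)).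

Definition is_quotient_by (Q : lmodType k) (pi : B -> Q) (act : B -> Q -> Q)
  (Wp : B -> Prop) : Prop :=
  klinear pi /\ (forall q, exists x, pi x = q) /\
  (forall b x, pi (b * x) = act b (pi x)) /\
  (forall x, pi x = 0 <-> Wp x).

(* Z' : right A-module maps from Delta = (A(x)A, x.a = x D(a))
   to epsilon = (k, c.a = c e(a)); right B-module via (g b)(u) = g (b u) *)
Definition Zprime (g : B -> k) : Prop :=
  (forall x y, g (x + y) = g x + g y) /\
  (forall x a, g (x * D a) = g x * e a).

(* The left B-module (Q, act) is a preantipode for the modulation (A, Delta, epsilon):
   an isomorphism of right B-modules Q^* ~ Z'. *)
Definition is_preantipode (Q : lmodType k) (act : B -> Q -> Q) : Prop :=
  exists Phi : (Q -> k) -> (B -> k),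
    (forall phi, kform phi -> Zprime (Phi phi)) /\
    (forall phi psi, kform phi -> kform psi ->
       Phi (fun q => phi q + psi q) = (fun u => Phi phi u + Phi psi u)) /\
    (forall phi b, kform phi ->
       Phi (fun q => phi (act b q)) = (fun u => Phi phi (b * u))) /\
    (forall phi psi, kform phi -> kform psi -> Phi phi = Phi psi -> phi = psi) /\
    (forall g, Zprime g -> exists phi, kform phi /\ Phi phi = g).

Definition free_rank_one (Q : lmodType k) (act : B -> Q -> Q) : Prop :=
  exists q0 : Q, forall q, exists! a : A, q = act (t a 1) q0.

Definition is_hopfish (Q : lmodType k) (act : B -> Q -> Q) : Prop :=
  is_preantipode act /\ free_rank_one act.

End Bialg.
End HopfishDefs.

From HB Require Import structures.
From mathcomp Require Import all_boot all_order all_algebra.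
From mathcomp Require Import boolp.
Set Implicit Arguments. Unset Strict Implicit. Unset Printing Implicit Defensive.
Import GRing.Theory.
Local Open Scope ring_scope.

(* Through [pi], k-linear forms on (A (x) A)/W are the forms on A (x) A killing
   W, and killing the generators of W is exactly being a right A-module map
   Delta -> epsilon; this is the preantipode.  Given an antipode S, the map
   a (x) b |-> a S(b) kills W because sum_(c) c_1 S(b c_2) = e(c) S(b), and the
   congruence 1 (x) b = S(b) (x) 1 mod W shows that a |-> [a (x) 1] is its
   inverse.  The three identities behind this (the one above, S(ab) = S(b)S(a)
   and the congruence) come from coassociativity, which is only available
   through a triple tensor product, so one is constructed. *)

Section Additive.
Variables (U V : zmodType) (g : U -> V).
Hypothesis gD : {morph g : x y / x + y}.

Lemma additive0 : g 0 = 0.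
Proof. by apply: (addrI (g 0)); rewrite -gD !addr0. Qed.

Lemma additiveN x : g (- x) = - g x.
Proof. by apply/eqP; rewrite -addr_eq0 -gD addNr additive0. Qed.

Lemma additiveB x y : g (x - y) = g x - g y.
Proof. by rewrite gD additiveN. Qed.

End Additive.

Section KLinear.
Variable k : comNzRingType.

Lemma klinearD (U V : lmodType k) (g : U -> V) :
  klinear g -> {morph g : x y / x + y}.
Proof. by move=> gL x y; rewrite -{1}[x]scale1r gL scale1r. Qed.

Lemma klinearZ (U V : lmodType k) (g : U -> V) :
  klinear g -> forall c x, g (c *: x) = c *: g x.
Proof.
by move=> gL c x; rewrite -[c *: x]addr0 gL (additive0 (klinearD gL)) addr0.
Qed.

Lemma klinear_comp (U V W : lmodType k) (f : U -> V) (g : V -> W) :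
  klinear f -> klinear g -> klinear (fun x => g (f x)).
Proof. by move=> fL gL c x y; rewrite fL gL. Qed.

Lemma klinear_mull (R : algType k) (a : R) : klinear (fun x : R => a * x).
Proof. by move=> c x y; rewrite mulrDr scalerAr. Qed.

Lemma klinear_mulr (R : algType k) (a : R) : klinear (fun x : R => x * a).
Proof. by move=> c x y; rewrite mulrDl -scalerAl. Qed.

Lemma kform_klinear (U : lmodType k) (f : U -> k) :
  kform f -> klinear (f : U -> k^o).
Proof. by []. Qed.

End KLinear.

Section TripleTensor.
Variables (k : comNzRingType) (U : lmodType k).

Definition formal3 := seq (k * (U * U * U)).

Definition eval3 (M : lmodType k) (f : U -> U -> U -> M) (l : formal3) : M :=
  \sum_(p <- l) p.1 *: f p.2.1.1 p.2.1.2 p.2.2.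

Definition equiv3 (l1 l2 : formal3) : Prop :=
  forall (M : lmodType k) (f : U -> U -> U -> M),
    trilinear f -> eval3 f l1 = eval3 f l2.

(* The tensor cube is the quotient of formal sums of triples by [equiv3]; a
   class is encoded by the predicate [equiv3 l], so that equality of classes
   is Leibniz equality, by propositional extensionality. *)
Definition tensor3 := {P : formal3 -> Prop | exists l, P = equiv3 l}.

Definition class3 (l : formal3) : tensor3 := exist _ (equiv3 l) (ex_intro _ l erefl).

Definition repr3 (x : tensor3) : formal3 := sval (cid (svalP x)).

Lemma class3_eq l1 l2 : equiv3 l1 l2 -> class3 l1 = class3 l2.
Proof.
move=> eq12; apply: eq_exist; apply: funext => l; apply: propext.
by split=> eq_l M f fT; rewrite -(eq_l M f fT) ?(eq12 M f fT).
Qed.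

Lemma repr3K : cancel repr3 class3.
Proof.
by case=> P hP; rewrite /repr3 /class3; case: cid => l /= eP; apply: eq_exist.
Qed.

Lemma class3_inj l1 l2 : class3 l1 = class3 l2 -> equiv3 l1 l2.
Proof. by move=> /(congr1 sval) /= ->. Qed.

Lemma eval3_repr l (M : lmodType k) (f : U -> U -> U -> M) :
  trilinear f -> eval3 f (repr3 (class3 l)) = eval3 f l.
Proof. exact: (class3_inj (repr3K (class3 l))). Qed.

Lemma tensor3_ext x y :
  (forall (M : lmodType k) (f : U -> U -> U -> M),
     trilinear f -> eval3 f (repr3 x) = eval3 f (repr3 y)) -> x = y.
Proof. by move=> eq_xy; rewrite -(repr3K x) -(repr3K y); apply: class3_eq. Qed.

Lemma eval3_cat (M : lmodType k) (f : U -> U -> U -> M) l1 l2 :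
  eval3 f (l1 ++ l2) = eval3 f l1 + eval3 f l2.
Proof. exact: big_cat. Qed.

Definition scale3 (c : k) (l : formal3) : formal3 := [seq (c * p.1, p.2) | p <- l].

Lemma eval3_scale (M : lmodType k) (f : U -> U -> U -> M) c l :
  eval3 f (scale3 c l) = c *: eval3 f l.
Proof. by rewrite /eval3 big_map scaler_sumr; apply: eq_bigr => p _; rewrite scalerA. Qed.

Definition add3 x y := class3 (repr3 x ++ repr3 y).
Definition zero3 := class3 [::].
Definition sc3 c x := class3 (scale3 c (repr3 x)).
Definition opp3 x := sc3 (-1) x.

Section Eval.
Variables (M : lmodType k) (f : U -> U -> U -> M).
Hypothesis fT : trilinear f.

Lemma eval3_add x y : eval3 f (repr3 (add3 x y)) = eval3 f (repr3 x) + eval3 f (repr3 y).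
Proof. by rewrite eval3_repr // eval3_cat. Qed.

Lemma eval3_zero : eval3 f (repr3 zero3) = 0.
Proof. by rewrite eval3_repr // /eval3 big_nil. Qed.

Lemma eval3_sc c x : eval3 f (repr3 (sc3 c x)) = c *: eval3 f (repr3 x).
Proof. by rewrite eval3_repr // eval3_scale. Qed.

End Eval.

Lemma add3A : associative add3.
Proof. by move=> x y z; apply: tensor3_ext => M f fT; rewrite !eval3_add // addrA. Qed.

Lemma add3C : commutative add3.
Proof. by move=> x y; apply: tensor3_ext => M f fT; rewrite !eval3_add // addrC. Qed.

Lemma add0_3 : left_id zero3 add3.
Proof. by move=> x; apply: tensor3_ext => M f fT; rewrite eval3_add // eval3_zero // add0r. Qed.

Lemma addN3 : left_inverse zero3 opp3 add3.
Proof.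
move=> x; apply: tensor3_ext => M f fT.
by rewrite eval3_add // eval3_sc // eval3_zero // scaleN1r addNr.
Qed.

HB.instance Definition _ := gen_eqMixin tensor3.
HB.instance Definition _ := gen_choiceMixin tensor3.
HB.instance Definition _ := GRing.isZmodule.Build tensor3 add3A add3C add0_3 addN3.

Lemma sc3A a b x : sc3 a (sc3 b x) = sc3 (a * b) x.
Proof. by apply: tensor3_ext => M f fT; rewrite !eval3_sc // scalerA. Qed.

Lemma sc3_1 : left_id 1 sc3.
Proof. by move=> x; apply: tensor3_ext => M f fT; rewrite eval3_sc // scale1r. Qed.

Lemma sc3Dr : right_distributive sc3 +%R.
Proof.
move=> c x y; apply: tensor3_ext => M f fT.
by rewrite eval3_sc // !eval3_add // !eval3_sc // scalerDr.
Qed.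

Lemma sc3Dl x : {morph sc3^~ x : a b / a + b}.
Proof.
move=> a b; apply: tensor3_ext => M f fT.
by rewrite eval3_add // !eval3_sc // scalerDl.
Qed.

HB.instance Definition _ := GRing.Zmodule_isLmodule.Build k tensor3 sc3A sc3_1 sc3Dr sc3Dl.

Definition tens3 (x y z : U) : tensor3 := class3 [:: (1, (x, y, z))].

Lemma eval3_tens3 (M : lmodType k) (f : U -> U -> U -> M) x y z :
  trilinear f -> eval3 f (repr3 (tens3 x y z)) = f x y z.
Proof. by move=> fT; rewrite eval3_repr // /eval3 big_seq1 scale1r. Qed.

Lemma class3_cons p l :
  class3 (p :: l) = p.1 *: tens3 p.2.1.1 p.2.1.2 p.2.2 + class3 l.
Proof.
apply: tensor3_ext => M f fT.
by rewrite (eval3_add fT) (eval3_sc fT) !eval3_repr // /eval3 big_cons big_seq1 scale1r.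
Qed.

Lemma is_tensor3_tens3 : is_tensor3 tens3.
Proof.
split.
  split; [|split] => a b c x y; apply: tensor3_ext => M f fT; have [f1 [f2 f3]] := fT;
  by rewrite (eval3_add fT) (eval3_sc fT) !eval3_tens3 // ?f1 ?f2 ?f3.
move=> M f fT; exists (fun x => eval3 f (repr3 x)); split.
  by split=> [c x y|x y z]; rewrite ?eval3_add ?eval3_sc ?eval3_tens3.
move=> g [gL g_tens3]; apply: funext => x; rewrite -[in RHS](repr3K x).
elim: (repr3 x) => [|p l IHl]; first by rewrite (additive0 (klinearD gL)) /eval3 big_nil.
by rewrite class3_cons gL g_tens3 -IHl /eval3 big_cons.
Qed.

End TripleTensor.

Section TensorProduct.
Variables (k : comNzRingType) (A B : algType k) (t : A -> A -> B).
Hypothesis t_tensor : is_tensor t.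

Lemma tensor_linl z : klinear (t^~ z).
Proof. by case: t_tensor => -[tL _] _; apply: tL. Qed.

Lemma tensor_linr z : klinear (t z).
Proof. by case: t_tensor => -[_ tR] _; apply: tR. Qed.

Lemma tensorZl c x z : t (c *: x) z = c *: t x z.
Proof. exact: (klinearZ (tensor_linl z)). Qed.

Lemma tensorZr c x z : t z (c *: x) = c *: t z x.
Proof. exact: (klinearZ (tensor_linr z)). Qed.

Lemma tensor_ext (M : lmodType k) (g1 g2 : B -> M) : klinear g1 -> klinear g2 ->
  (forall u v, g1 (t u v) = g2 (t u v)) -> g1 =1 g2.
Proof.
move=> g1L g2L eq_g; case: t_tensor => _ /(_ M (fun u v => g1 (t u v))) [].
  by split=> [v|u] c x y; rewrite ?tensor_linl ?tensor_linr g1L.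
move=> g [_ g_uniq] x.
rewrite -(g_uniq g1 (conj g1L (fun u v => erefl))).
by rewrite (g_uniq g2 (conj g2L (fun u v => esym (eq_g u v)))).
Qed.

Variable D : A -> B.
Hypothesis D_coassoc : coassociative t D.

(* [F] applied to [(D (x) id) (D a)] and to [(id (x) D) (D a)]: [H1], [H2]
   are [F] with two of its arguments read off a tensor, [K1], [K2] the
   composites with [D (x) id] and [id (x) D]. *)
Lemma coassoc_trilinear (M : lmodType k) (F : A -> A -> A -> M)
    (H1 H2 : A -> B -> M) (K1 K2 : B -> M) :
  trilinear F ->
  (forall z, klinear (H1 z)) -> (forall x y z, H1 z (t x y) = F x y z) ->
  (forall x, klinear (H2 x)) -> (forall x y z, H2 x (t y z) = F x y z) ->
  klinear K1 -> (forall x y, K1 (t x y) = H1 y (D x)) ->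
  klinear K2 -> (forall x y, K2 (t x y) = H2 x (D y)) ->
  forall a, K1 (D a) = K2 (D a).
Proof.
move=> FT H1L H1t H2L H2t K1L K1t K2L K2t a.
have [_ /(_ M F FT) [G [[GL Gt] _]]] := is_tensor3_tens3 A.
have [El [Er [D1 [D2 [ElP [ErP [D1L [D1t [D2L [D2t coassD]]]]]]]]]] :=
  D_coassoc (is_tensor3_tens3 A).
have GEl z : G \o El z =1 H1 z.
  apply: tensor_ext => // [|x y]; first exact: klinear_comp (ElP z).1 GL.
  by rewrite /= (ElP z).2 Gt H1t.
have GEr x : G \o Er x =1 H2 x.
  apply: tensor_ext => // [|y z]; first exact: klinear_comp (ErP x).1 GL.
  by rewrite /= (ErP x).2 Gt H2t.
have GD1 : G \o D1 =1 K1.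
  apply: tensor_ext => // [|x y]; first exact: klinear_comp D1L GL.
  by rewrite /= D1t K1t -GEl.
have GD2 : G \o D2 =1 K2.
  apply: tensor_ext => // [|x y]; first exact: klinear_comp D2L GL.
  by rewrite /= D2t K2t -GEr.
by rewrite -GD1 -GD2 /= coassD.
Qed.

End TensorProduct.

Section Quotient.
Variables (k : comNzRingType) (A B : algType k) (D : A -> B) (e : A -> k).
Variables (Q : lmodType k) (pi : B -> Q) (act : B -> Q -> Q).
Hypothesis pi_quot : is_quotient_by pi act (Wideal D e).

Lemma pi_lin : klinear pi. Proof. by case: pi_quot. Qed.
Lemma pi_surj q : exists x, pi x = q. Proof. by case: pi_quot => _ []. Qed.
Lemma pi_mul b x : pi (b * x) = act b (pi x). Proof. by case: pi_quot => _ [_ []]. Qed.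
Lemma pi_eq0 x : pi x = 0 <-> Wideal D e x. Proof. by case: pi_quot => _ [_ []]. Qed.

Definition qlift (q : Q) : B := sval (cid (pi_surj q)).

Lemma qliftK : cancel qlift pi.
Proof. by move=> q; rewrite /qlift; case: cid. Qed.

Lemma Wideal_vanish (M : zmodType) (g : B -> M) : {morph g : x y / x + y} ->
  (forall y a, g (y * (e a *: 1 - D a)) = 0) -> forall x, Wideal D e x -> g x = 0.
Proof.
move=> gD g_gen x [n [y [a ->]]].
apply: (big_ind (fun x => g x = 0)) => [|u v gu gv|i _]; first exact: additive0.
  by rewrite gD gu gv addr0.
exact: g_gen.
Qed.

Lemma qlift_pi (M : zmodType) (g : B -> M) : {morph g : x y / x + y} ->
  (forall y a, g (y * (e a *: 1 - D a)) = 0) -> forall x, g (qlift (pi x)) = g x.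
Proof.
move=> gD g_gen x; apply/eqP; rewrite -subr_eq0 -(additiveB gD).
apply/eqP/(Wideal_vanish gD g_gen)/pi_eq0.
by rewrite (additiveB (klinearD pi_lin)) qliftK subrr.
Qed.

Lemma pi_mulD a y : pi (y * D a) = e a *: pi y.
Proof.
have : Wideal D e (y * (e a *: 1 - D a)).
  by exists 1%N, (fun=> y), (fun=> a); rewrite big_ord1.
move/pi_eq0; rewrite mulrBr -scalerAr mulr1 (additiveB (klinearD pi_lin)) (klinearZ pi_lin).
by move/eqP; rewrite subr_eq0 => /eqP.
Qed.

Hypotheses (D_lin : klinear D) (D1 : D 1 = 1) (e_form : kform e) (e1 : e 1 = 1).

Lemma Zprime_scale (g : B -> k) c x : Zprime D e g -> g (c *: x) = g x * c.
Proof.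
case=> _ gDe; have := gDe x (c *: 1).
rewrite (klinearZ D_lin) D1 -scalerAr (mulr1 x) (klinearZ (kform_klinear e_form)) e1 => ->.
by congr (_ * _); apply: mulr1.
Qed.

Lemma preantipode_quotient : is_preantipode D e act.
Proof.
have piD := klinearD pi_lin.
exists (fun phi u => phi (pi u)); split; [|split; [|split; [|split]]].
- move=> phi /kform_klinear phiL; split=> [x y|x a].
    by rewrite piD (klinearD phiL).
  by rewrite pi_mulD (klinearZ phiL) mulrC.
- by [].
- by move=> phi b _; apply: funext => u; rewrite pi_mul.
- move=> phi psi _ _ eq_phi; apply: funext => q; have [x <-] := pi_surj q.
  exact: (congr1 (fun f => f x) eq_phi).
move=> g gZ; have [gD gDe] := gZ.
have gK : forall x, g (qlift (pi x)) = g x.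
  apply: (qlift_pi gD) => y a.
  by rewrite mulrBr (additiveB gD) -scalerAr (mulr1 y) (Zprime_scale _ _ gZ) gDe mulrC subrr.
exists (g \o qlift); split; last by apply: funext => u; apply: gK.
move=> c q q' /=; rewrite -(qliftK q) -(qliftK q') -(klinearZ pi_lin) -piD !gK gD.
by rewrite (Zprime_scale _ _ gZ) mulrC.
Qed.

End Quotient.

Section Antipode.
Variables (k : comNzRingType) (A B : algType k) (t : A -> A -> B).
Variables (D : A -> B) (e : A -> k) (eps_id id_eps : B -> A).
Variables (S : A -> A) (mulS Smul : B -> A).
Variables (Q : lmodType k) (pi : B -> Q) (act : B -> Q -> Q).
Hypotheses (t_tensor : is_tensor t) (t11 : t 1 1 = 1)
  (t_mul : forall a b c d, t a b * t c d = t (a * c) (b * d)).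
Hypotheses (D_mul : forall a b, D (a * b) = D a * D b) (D1 : D 1 = 1)
  (D_coassoc : coassociative t D).
Hypotheses (e_mul : forall a b, e (a * b) = e a * e b) (e1 : e 1 = 1).
Hypotheses (eps_id_lin : klinear eps_id) (eps_id_t : forall a b, eps_id (t a b) = e a *: b)
  (eps_id_D : forall a, eps_id (D a) = a).
Hypotheses (id_eps_lin : klinear id_eps) (id_eps_t : forall a b, id_eps (t a b) = e b *: a)
  (id_eps_D : forall a, id_eps (D a) = a).
Hypotheses (S_lin : klinear S) (mulS_lin : klinear mulS) (Smul_lin : klinear Smul).
Hypotheses (mulS_t : forall a b, mulS (t a b) = a * S b)
  (mulS_D : forall a, mulS (D a) = e a *: 1).
Hypotheses (Smul_t : forall a b, Smul (t a b) = S a * b)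
  (Smul_D : forall a, Smul (D a) = e a *: 1).
Hypothesis pi_quot : is_quotient_by pi act (Wideal D e).

Lemma tensor_split a b : t a b = t a 1 * t 1 b.
Proof. by rewrite t_mul mulr1 mul1r. Qed.

Lemma mulS_mull a w : mulS (t a 1 * w) = a * mulS w.
Proof.
move: w; apply: (tensor_ext t_tensor) => [||x y].
- exact: klinear_comp (klinear_mull _) mulS_lin.
- exact: klinear_comp mulS_lin (klinear_mull _).
by rewrite t_mul mul1r !mulS_t mulrA.
Qed.

Lemma mulS_1D a c : mulS (t 1 a * D c) = e c *: S a.
Proof.
pose V z := mulS (t 1 z * D c).
have V_lin : klinear V.
  by move=> c0 u v; rewrite /V (tensor_linr t_tensor) mulrDl -scalerAl mulS_lin.
rewrite -{1}(eps_id_D a) -[in RHS](id_eps_D a).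
apply: (coassoc_trilinear t_tensor D_coassoc
  (F := fun x y z => S x * mulS (t y z * D c))
  (H1 := fun z w => Smul w * V z) (H2 := fun x w => S x * mulS (w * D c))
  (K1 := fun w => V (eps_id w)) (K2 := fun w => e c *: S (id_eps w))).
- split; [|split] => [y z|x z|x y] c0 u v.
  + by rewrite S_lin mulrDl -scalerAl.
  + by rewrite (tensor_linl t_tensor) mulrDl -scalerAl mulS_lin mulrDr scalerAr.
  + by rewrite (tensor_linr t_tensor) mulrDl -scalerAl mulS_lin mulrDr scalerAr.
- by move=> z; apply: klinear_comp Smul_lin (klinear_mulr _).
- by move=> x y z; rewrite Smul_t -mulrA /V -mulS_mull mulrA -tensor_split.
- by move=> x; apply: klinear_comp (klinear_comp (klinear_mulr _) mulS_lin) (klinear_mull _).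
- by [].
- exact: klinear_comp eps_id_lin V_lin.
- by move=> x y; rewrite eps_id_t (klinearZ V_lin) Smul_D -scalerAl mul1r.
- by move=> c0 u v; rewrite id_eps_lin S_lin scalerDr !scalerA mulrC.
by move=> x y; rewrite id_eps_t -D_mul mulS_D e_mul !(klinearZ S_lin) -scalerAr mulr1
  scalerA mulrC.
Qed.

Lemma antipodeM a b : S (a * b) = S b * S a.
Proof.
rewrite -{1}(eps_id_D b) -[in RHS](id_eps_D b).
apply: (coassoc_trilinear t_tensor D_coassoc
  (F := fun x y z => S x * mulS (t y (a * z)))
  (H1 := fun z w => Smul w * S (a * z)) (H2 := fun x w => S x * mulS (t 1 a * w))
  (K1 := fun w => S (a * eps_id w)) (K2 := fun w => S (id_eps w) * S a)).
- split; [|split] => [y z|x z|x y] c0 u v.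
  + by rewrite S_lin mulrDl -scalerAl.
  + by rewrite (tensor_linl t_tensor) mulS_lin mulrDr scalerAr.
  + by rewrite mulrDr -scalerAr (tensor_linr t_tensor) mulS_lin mulrDr scalerAr.
- by move=> z; apply: klinear_comp Smul_lin (klinear_mulr _).
- by move=> x y z; rewrite Smul_t mulS_t mulrA.
- by move=> x; apply: klinear_comp (klinear_comp (klinear_mull _) mulS_lin) (klinear_mull _).
- by move=> x y z; rewrite t_mul mul1r.
- exact: klinear_comp eps_id_lin (klinear_comp (klinear_mull _) S_lin).
- by move=> x y; rewrite eps_id_t Smul_D -scalerAr (klinearZ S_lin) -scalerAl mul1r.
- exact: klinear_comp id_eps_lin (klinear_comp S_lin (klinear_mulr _)).
by move=> x y; rewrite id_eps_t mulS_1D (klinearZ S_lin) -scalerAr -scalerAl.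
Qed.

Lemma antipode1 : S 1 = 1.
Proof. by have := mulS_D 1; rewrite D1 -t11 mulS_t e1 scale1r mul1r. Qed.

Lemma mulS_mulr b w : mulS (t 1 b * w) = mulS w * S b.
Proof.
move: w; apply: (tensor_ext t_tensor) => [||x y].
- exact: klinear_comp (klinear_mull _) mulS_lin.
- exact: klinear_comp mulS_lin (klinear_mulr _).
by rewrite t_mul mul1r !mulS_t antipodeM mulrA.
Qed.

Lemma mulS_mulD a w : mulS (w * D a) = e a *: mulS w.
Proof.
move: w; apply: (tensor_ext t_tensor) => [||x y].
- exact: klinear_comp (klinear_mulr _) mulS_lin.
- by move=> c u v; rewrite mulS_lin !scalerDr !scalerA mulrC.
by rewrite tensor_split -mulrA mulS_mull mulS_1D mulS_mull mulS_t mul1r scalerAr.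
Qed.

Lemma pi_t1 b : pi (t 1 b) = pi (t (S b) 1).
Proof.
have pi_lin := pi_lin pi_quot.
rewrite -{1}(eps_id_D b) -[in RHS](id_eps_D b).
apply: (coassoc_trilinear t_tensor D_coassoc
  (F := fun x y z => pi (t (S x * y) z))
  (H1 := fun z w => pi (t (Smul w) z)) (H2 := fun x w => pi (t (S x) 1 * w))
  (K1 := fun w => pi (t 1 (eps_id w))) (K2 := fun w => pi (t (S (id_eps w)) 1))).
- split; [|split] => [y z|x z|x y] c0 u v.
  + by rewrite S_lin mulrDl -scalerAl (tensor_linl t_tensor) pi_lin.
  + by rewrite mulrDr -scalerAr (tensor_linl t_tensor) pi_lin.
  + by rewrite (tensor_linr t_tensor) pi_lin.
- by move=> z; apply: klinear_comp Smul_lin (klinear_comp (tensor_linl t_tensor z) pi_lin).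
- by move=> x y z; rewrite Smul_t.
- by move=> x; apply: klinear_comp (klinear_mull _) pi_lin.
- by move=> x y z; rewrite t_mul mul1r.
- exact: klinear_comp eps_id_lin (klinear_comp (tensor_linr t_tensor 1) pi_lin).
- by move=> x y; rewrite eps_id_t Smul_D tensorZl // tensorZr // !(klinearZ pi_lin).
- have pi_t1_lin := klinear_comp (tensor_linl t_tensor 1) pi_lin.
  exact: klinear_comp id_eps_lin (klinear_comp S_lin pi_t1_lin).
by move=> x y; rewrite id_eps_t (pi_mulD pi_quot) (klinearZ S_lin) tensorZl // (klinearZ pi_lin).
Qed.

Definition quot_antipode (q : Q) : A := mulS (qlift pi_quot q).

Lemma quot_antipode_pi x : quot_antipode (pi x) = mulS x.
Proof.
apply: (qlift_pi pi_quot (klinearD mulS_lin)) => y a.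
rewrite mulrBr (additiveB (klinearD mulS_lin)) mulS_mulD -scalerAr (mulr1 y).
by rewrite (klinearZ mulS_lin) subrr.
Qed.

Lemma pi_mulS1 x : pi (t (mulS x) 1) = pi x.
Proof.
have pi_lin := pi_lin pi_quot.
move: x; apply: (tensor_ext t_tensor) => [||x y].
- exact: klinear_comp mulS_lin (klinear_comp (tensor_linl t_tensor 1) pi_lin).
- exact: pi_lin.
by rewrite mulS_t [in RHS]tensor_split (pi_mul pi_quot) pi_t1 -(pi_mul pi_quot) t_mul mulr1.
Qed.

Lemma quot_antipode_act a q : quot_antipode (act (t a 1) q) = a * quot_antipode q.
Proof. by rewrite -(qliftK pi_quot q) -(pi_mul pi_quot) !quot_antipode_pi mulS_mull. Qed.

Definition quot_inl (a : A) : Q := pi (t a 1).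

Lemma quot_antipodeK : cancel quot_antipode quot_inl.
Proof. by move=> q; rewrite /quot_inl pi_mulS1 qliftK. Qed.

Lemma quot_inlK : cancel quot_inl quot_antipode.
Proof. by move=> a; rewrite quot_antipode_pi mulS_t antipode1 mulr1. Qed.

Lemma quot_antipode_iso : exists psi : Q -> A,
  (forall a b, psi (pi (t a b)) = a * S b) /\
  (forall p q, psi (p + q) = psi p + psi q) /\
  bijective psi /\
  (forall a q, psi (act (t a 1) q) = a * psi q) /\
  (forall b q, psi (act (t 1 b) q) = psi q * S b).
Proof.
have pi_mul := pi_mul pi_quot; have qliftK := qliftK pi_quot.
exists quot_antipode; split; [|split; [|split; [|split]]].
- by move=> a b; rewrite quot_antipode_pi mulS_t.
- move=> p q; rewrite -(qliftK p) -(qliftK q) -(klinearD (pi_lin pi_quot)).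
  by rewrite !quot_antipode_pi (klinearD mulS_lin).
- exact: Bijective quot_antipodeK quot_inlK.
- exact: quot_antipode_act.
by move=> b q; rewrite -(qliftK q) -pi_mul !quot_antipode_pi mulS_mulr.
Qed.

Lemma quot_free_rank_one : free_rank_one t act.
Proof.
exists (pi 1) => q; exists (quot_antipode q); split.
  by rewrite -(pi_mul pi_quot) mulr1 [RHS]quot_antipodeK.
by move=> a ->; rewrite quot_antipode_act -t11 quot_inlK mulr1.
Qed.

End Antipode.

Theorem theorem4p2 (k : comNzRingType) (A B : algType k) (t : A -> A -> B)
  (D : A -> B) (e : A -> k) (Q : lmodType k) (pi : B -> Q) (act : B -> Q -> Q) :
  is_tensor_algebra t ->
  is_bialgebra t D e ->
  is_quotient_by pi act (Wideal D e) ->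
  is_preantipode D e act /\
  (forall S : A -> A, is_antipode t D e S ->
     (exists psi : Q -> A,
        (forall a b, psi (pi (t a b)) = a * S b) /\
        (forall p q, psi (p + q) = psi p + psi q) /\
        bijective psi /\
        (forall a q, psi (act (t a 1) q) = a * psi q) /\
        (forall b q, psi (act (t 1 b) q) = psi q * S b)) /\
     is_hopfish t D e act).
Proof.
move=> [t_tensor [t11 t_mul]] [[D_lin [D_mul D1]] [[e_form [e_mul e1]] [cl [cr coass]]]] pi_quot.
have preanti := preantipode_quotient pi_quot D_lin D1 e_form e1.
split=> // S [S_lin [[Smul [Smul_lin [Smul_t Smul_D]]] [mulS [mulS_lin [mulS_t mulS_D]]]]].
have [eps_id [eps_id_lin [eps_id_t eps_id_D]]] := cl.
have [id_eps [id_eps_lin [id_eps_t id_eps_D]]] := cr.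
split; last split=> //.
  by apply: (quot_antipode_iso (D := D) (e := e) (eps_id := eps_id) (id_eps := id_eps)
    (mulS := mulS) (Smul := Smul)).
by apply: (quot_free_rank_one (D := D) (e := e) (eps_id := eps_id) (id_eps := id_eps)
  (S := S) (mulS := mulS) (Smul := Smul) (pi := pi)).
Qed.
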